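(* For every integer $n\ge1$, $\operatorname{num}_{\mathcal T}(n,-1)=3^{v_3(n!)}$. In particular, for every $n\ge1$, $$\operatorname{num}_{\mathcal T}(3n,-1)=\operatorname{num}_{\mathcal T}(3n+1,-1)=\operatorname{num}_{\mathcal T}(3n+2,-1)=3^{v_3((3n)!)}.$$
   Context: $v_3(M)$ is the exponent of $3$ in the positive integer $M$. A ternary partition of $n$ is a partition of $n$ (finite nonincreasing sequence of positive integers summing to $n$) all of whose parts are powers of $3$ (including $1$); $\mathcal T(n)$ is the set of ternary partitions of $n$, and $m_\lambda(i)$ the number of parts of $\lambda$ equal to $i$. For $\lambda\in\mathcal T(n)$ let $h_{\mathcal T,\lambda}(x)=\prod_{k\ge0}(1+x^{3^k})^{\lfloor n/3^k\rfloor-m_\lambda(3^k)}$. Let $G_{\mathcal T}(n,x)=\gcd\{h_{\mathcal T,\lambda}(x):\lambda\in\mathcal T(n)\}$ in $\mathbb{Z}[x]$ (normalized with positive leading coefficient), and $\operatorname{num}_{\mathcal T}(n,x)=\frac{1}{G_{\mathcal T}(n,x)}\sum_{\lambda\in\mathcal T(n)}h_{\mathcal T,\lambda}(x)\in\mathbb{Z}[x]$. *)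

From mathcomp Require Import all_boot all_order all_algebra.
Set Implicit Arguments. Unset Strict Implicit. Unset Printing Implicit Defensive.
Import GRing.Theory Num.Theory.
Local Open Scope ring_scope.

(* p is a power of 3 (p = 3^k for some k; such k satisfies k <= p). *)
Definition pow3 (p : nat) : bool := [exists k : 'I_p.+1, p == (3 ^ k)%N].

(* A partition of n has at most n parts, each at most n.  We represent a
   partition of n as an n-tuple with entries in {0..n}: its parts listed in
   nonincreasing order, padded at the end with zeros. *)
Definition is_ternary (n : nat) (t : n.-tuple 'I_n.+1) : bool :=
  [&& sorted geq (map val t),
      sumn (map val t) == n
    & all (fun p => (p == 0%N) || pow3 p) (map val t)].

Definition mult (n : nat) (t : n.-tuple 'I_n.+1) (i : nat) : nat :=
  count_mem i (map val t).

(* h_{T,lambda}(x) = prod_{k>=0} (1 + x^{3^k})^(floor(n/3^k) - m_lambda(3^k)).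
   Factors with k > n are 1 (3^k > n), so the product is truncated to k <= n. *)
Definition hT (n : nat) (t : n.-tuple 'I_n.+1) : {poly int} :=
  \prod_(k < n.+1) (1 + 'X^((3 ^ k)%N)) ^+ (n %/ 3 ^ k - mult t (3 ^ k))%N.

Definition dvdZ (d p : {poly int}) : Prop := exists q : {poly int}, p = d * q.

Definition is_gcdT (n : nat) (g : {poly int}) : Prop :=
  [/\ (forall t : n.-tuple 'I_n.+1, is_ternary t -> dvdZ g (hT t)),
      (forall d : {poly int},
          (forall t : n.-tuple 'I_n.+1, is_ternary t -> dvdZ d (hT t)) ->
          dvdZ d g)
    & 0 < lead_coef g].

Definition sumT (n : nat) : {poly int} :=
  \sum_(t : n.-tuple 'I_n.+1 | is_ternary t) hT t.

Definition numT (n : nat) (q : {poly int}) : Prop :=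
  exists g : {poly int}, is_gcdT n g /\ sumT n = g * q.

From mathcomp Require Import all_boot all_order all_algebra.
From mathcomp Require Import zify ring.
Set Implicit Arguments. Unset Strict Implicit. Unset Printing Implicit Defensive.
Import GRing.Theory Num.Theory Pdiv.Idomain.

(* Write c_0 = 1 + X and c_j = Phi_(2 3^j) = 1 - X^(3^(j-1)) + X^(2 3^(j-1)) for
   j >= 1, so that 1 + X^(3^k) = c_0 c_1 ... c_k and h_lambda = prod_j c_j^(E_j)
   with E_j = sum_(k >= j) (floor(n/3^k) - m_lambda(3^k)).  Each part 3^k with
   k >= j weighs at least 3^j, so there are at most floor(n/3^j) of them and
   E_j >= T_(j+1) := sum_(k > j) floor(n/3^k): g = prod_j c_j^(T_(j+1)) divides
   every h_lambda.  Conversely, a common divisor d of the h_lambda divides a monic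
   polynomial, so its leading coefficient is a unit.  The partitions
   (3^m)^(floor(n/3^m)) 1^(n mod 3^m), m = 0, ..., n, together with the Bezout
   identity c_(m+1) + (2 - X^(3^m)) (1 + X^(3^m)) = 3, lower the exponents of
   c_1, c_2, ... one at a time to those of g, so d divides g and g is the gcd.
   At x = -1, c_0 vanishes and c_j = 3 for j >= 1; every h_lambda / g except
   that of lambda = 1^n contains c_0, so num(n, -1) = 3^(sum_(j >= 1)
   floor(n/3^j)) = 3^(v_3(n!)) by Legendre's formula. *)


Lemma count_mem_mul_leq_sumn (x : nat) (s : seq nat) : count_mem x s * x <= sumn s.
Proof.
elim: s => //= y s IH; rewrite mulnDl leq_add //.
by case: eqP => [->|]; rewrite ?mul1n ?mul0n.
Qed.

Lemma sum_pow3_count_leq (s : seq nat) L :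
  \sum_(0 <= k < L) 3 ^ k * count_mem (3 ^ k) s <= sumn s.
Proof.
elim: s => [|x s IH]; first by rewrite big1 // => k _; rewrite muln0.
under eq_bigr do rewrite /= mulnDr.
rewrite big_split /= leq_add // big_mkord.
have [k /eqP x_k|no_k] := pickP (fun k : 'I_L => x == 3 ^ k); last first.
  by rewrite big1 // => k _; rewrite no_k muln0.
rewrite (bigD1 k) //= x_k eqxx muln1 big1 ?addn0 // => i ik.
by rewrite eqn_exp2l // eq_sym (inj_eq val_inj) (negbTE ik) muln0.
Qed.

Lemma pow3_mul_sum_count_leq (s : seq nat) j L :
  3 ^ j * \sum_(j <= k < L) count_mem (3 ^ k) s <=
  \sum_(j <= k < L) 3 ^ k * count_mem (3 ^ k) s.
Proof.
rewrite big_distrr big_nat_cond [X in _ <= X]big_nat_cond.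
by apply: leq_sum => k /andP[/andP[jk _] _]; rewrite leq_mul2r leq_pexp2l ?orbT.
Qed.

Lemma tail_pow3_count_leq (s : seq nat) j L :
  3 ^ j * \sum_(j <= k < L) count_mem (3 ^ k) s <= sumn s.
Proof.
have [jL|Lj] := leqP j L; last by rewrite big_geq ?muln0 // ltnW.
apply: leq_trans (pow3_mul_sum_count_leq s j L) _.
apply: leq_trans (sum_pow3_count_leq s L).
by rewrite (big_cat_nat (leq0n j) jL) /= leq_addl.
Qed.

Lemma logn_factS_ndvd p m : prime p -> ~~ (p %| m.+1) -> logn p m.+1`! = logn p m`!.
Proof.
move=> p_pr p_ndvd; rewrite factS lognM ?fact_gt0 //.
by rewrite logn_coprime ?prime_coprime.
Qed.

Lemma pow3_expn k : pow3 (3 ^ k).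
Proof.
by apply/existsP; exists (Ordinal (ltnW (ltn_expl k (isT : 1 < 3)) : k < (3 ^ k).+1)).
Qed.

Section TernaryPartition.
Variable n : nat.
Implicit Type t : n.-tuple 'I_n.+1.

Definition quot_tail j := \sum_(j <= k < n.+1) n %/ 3 ^ k.

Definition mult_tail t j := \sum_(j <= k < n.+1) mult t (3 ^ k).

Definition hT_exp t j := \sum_(j <= k < n.+1) (n %/ 3 ^ k - mult t (3 ^ k)).

Lemma quot_tail_recl j : j < n.+1 -> quot_tail j = n %/ 3 ^ j + quot_tail j.+1.
Proof. exact: big_ltn. Qed.

Lemma leq_quot_tail i j : i <= j -> quot_tail j <= quot_tail i.
Proof.
move=> ij; have [jn|nj] := leqP j n.+1; last by rewrite /quot_tail big_geq // ltnW.
by rewrite /quot_tail (big_cat_nat ij jn) leq_addl.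
Qed.

Lemma mult_leq_quot t k : sumn (map val t) = n -> mult t (3 ^ k) <= n %/ 3 ^ k.
Proof.
move=> sum_t; rewrite leq_divRL ?expn_gt0 // -[X in _ <= X]sum_t.
exact: count_mem_mul_leq_sumn.
Qed.

Lemma mult_tail_leq_quot t j : sumn (map val t) = n -> mult_tail t j <= n %/ 3 ^ j.
Proof.
move=> sum_t; rewrite leq_divRL ?expn_gt0 // mulnC -[X in _ <= X]sum_t.
exact: tail_pow3_count_leq.
Qed.

Lemma hT_exp_leq_quot_tail t j : hT_exp t j <= quot_tail j.
Proof. by apply: leq_sum => k _; apply: leq_subr. Qed.

Lemma hT_exp_add_mult_tail t j : sumn (map val t) = n ->
  hT_exp t j + mult_tail t j = quot_tail j.
Proof.
move=> sum_t; rewrite /hT_exp sumnB => [|k _]; last exact: mult_leq_quot.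
by rewrite subnK //; apply: leq_sum => k _; apply: mult_leq_quot.
Qed.

Lemma quot_tailS_leq_hT_exp t j : sumn (map val t) = n -> j < n.+1 ->
  quot_tail j.+1 <= hT_exp t j.
Proof.
move=> sum_t jn; have := hT_exp_add_mult_tail j sum_t.
have := mult_tail_leq_quot j sum_t; rewrite quot_tail_recl //; lia.
Qed.

(* Here all n parts of t are powers of 3, and weighing them by 3^k forces them to be 1. *)
Lemma hT_exp0_ones t : sumn (map val t) = n -> hT_exp t 0 = quot_tail 1 ->
  map val t = nseq n 1.
Proof.
move=> sum_t hT_exp0.
have := hT_exp_add_mult_tail 0 sum_t.
rewrite hT_exp0 [quot_tail 0]quot_tail_recl // expn0 divn1 addnC => /addIn.
rewrite /mult_tail big_ltn // expn0 => mult_tail0.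
have := sum_pow3_count_leq (map val t) n.+1.
rewrite sum_t big_ltn // expn0 mul1n => weighted_sum.
have := pow3_mul_sum_count_leq (map val t) 1 n.+1; rewrite expn1 => weight.
have mult1 : mult t 1 = n by move: mult_tail0; rewrite /mult_tail /mult; lia.
have size_t : size (map val t) = n by rewrite size_map size_tuple.
have /all_pred1P : all (pred1 1) (map val t) by rewrite all_count size_t; apply/eqP.
by rewrite size_t.
Qed.

Definition pow_ones_seq m : seq nat :=
  nseq (n %/ 3 ^ m) (3 ^ m) ++ nseq (n %% 3 ^ m) 1 ++
  nseq (n - n %/ 3 ^ m - n %% 3 ^ m) 0.

Lemma quot_add_mod_leq m : n %/ 3 ^ m + n %% 3 ^ m <= n.
Proof.
rewrite [X in _ <= X](divn_eq n (3 ^ m)) leq_add2r.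
by rewrite leq_pmulr ?expn_gt0.
Qed.

Lemma pow_ones_seq_leq m x : x \in pow_ones_seq m -> x <= n.
Proof.
rewrite !mem_cat !mem_nseq => /or3P[] /andP[pos /eqP ->] //.
  by apply: leq_trans (leq_trunc_div n (3 ^ m)); rewrite leq_pmull.
exact: leq_trans pos (leq_trans (leq_addl _ _) (quot_add_mod_leq m)).
Qed.

Lemma size_pow_ones_seq m : size (map (@inord n) (sort geq (pow_ones_seq m))) == n.
Proof.
rewrite size_map size_sort !size_cat !size_nseq.
by have := quot_add_mod_leq m; lia.
Qed.

Definition pow_ones_part m : n.-tuple 'I_n.+1 := Tuple (size_pow_ones_seq m).

Lemma val_pow_ones_part m : map val (pow_ones_part m) = sort geq (pow_ones_seq m).
Proof.
rewrite /= -map_comp; apply: map_id_in => x; rewrite mem_sort => x_in /=.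
by rewrite inordK // ltnS (pow_ones_seq_leq x_in).
Qed.

Lemma mult_pow_ones_part m k :
  mult (pow_ones_part m) (3 ^ k) = (k == m) * (n %/ 3 ^ m) + (k == 0) * (n %% 3 ^ m).
Proof.
rewrite /mult val_pow_ones_part (permP (permEl (perm_sort _ _))) /=.
rewrite !count_cat !count_nseq /= eqn_exp2l // [m == k]eq_sym.
rewrite -[X in X == 3 ^ k](expn0 3) eqn_exp2l // [0 == k]eq_sym.
by rewrite [0 == _]eq_sym expn_eq0 mul0n addn0.
Qed.

Lemma pow_ones_part_ternary m : is_ternary (pow_ones_part m).
Proof.
rewrite /is_ternary val_pow_ones_part; apply/and3P; split.
- by apply: sort_sorted => x y; apply: leq_total.
- rewrite (perm_sumn (permEl (perm_sort _ _))) !sumn_cat !sumn_nseq.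
  by rewrite mul0n addn0 mul1n mulnC -divn_eq.
- rewrite (eq_all_r (perm_mem (permEl (perm_sort _ _)))) !all_cat !all_nseq /=.
  by rewrite pow3_expn (pow3_expn 0) !orbT.
Qed.

Lemma hT_exp_pow_ones_part m j : m <= j < n.+1 ->
  hT_exp (pow_ones_part m) j = quot_tail (j + (j == m)).
Proof.
case/andP=> mj jn.
have exp_k k : m <= k ->
    n %/ 3 ^ k - mult (pow_ones_part m) (3 ^ k) = (k != m) * (n %/ 3 ^ k).
  rewrite mult_pow_ones_part leq_eqVlt eq_sym => /predU1P[->|mk].
    by rewrite eqxx mul1n subnDA subnn.
  by rewrite gtn_eqF // mul0n add0n (gtn_eqF (leq_ltn_trans (leq0n m) mk)) subn0 mul1n.
rewrite /hT_exp /quot_tail; have [ejm|jm] := eqVneq j m.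
  subst j; rewrite addn1 big_ltn // exp_k // eqxx mul0n add0n.
  by apply: eq_big_nat => k /andP[mk _]; rewrite (exp_k k (ltnW mk)) (gtn_eqF mk) mul1n.
have mj' : m < j by rewrite ltn_neqAle eq_sym jm mj.
rewrite addn0; apply: eq_big_nat => k /andP[jk _].
by rewrite (exp_k k (leq_trans mj jk)) (gtn_eqF (leq_trans mj' jk)) mul1n.
Qed.

Lemma eq_pow_ones_part0 t : is_ternary t -> hT_exp t 0 = quot_tail 1 ->
  t = pow_ones_part 0.
Proof.
case/and3P=> _ /eqP sum_t _ /(hT_exp0_ones sum_t) val_t.
have /and3P[_ /eqP sum0 _] := pow_ones_part_ternary 0.
apply: val_inj; apply: (inj_map val_inj); rewrite val_t (hT_exp0_ones sum0) //.
by rewrite hT_exp_pow_ones_part.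
Qed.

End TernaryPartition.

Local Open Scope ring_scope.

Definition cyc3 (j : nat) : {poly int} :=
  if j is i.+1 then 1 - 'X^(3 ^ i) + 'X^(3 ^ i) ^+ 2 else 1 + 'X.

Lemma prod_cyc3 k : 1 + 'X^(3 ^ k) = \prod_(0 <= j < k.+1) cyc3 j.
Proof.
elim: k => [|k IH]; first by rewrite big_nat1 expn0.
rewrite big_nat_recr //= -IH expnS mulnC exprM /=.
set y := 'X^(3 ^ k); ring.
Qed.

Lemma cyc3_monic j : cyc3 j \is monic.
Proof.
case: j => [|j]; first by rewrite /cyc3 addrC -[1]/(1%:P) monicXaddC.
have monic_binom k : (1 + 'X^(3 ^ k) : {poly int}) \is monic.
  by rewrite addrC -[1]/(1%:P) monicXnaddC // expn_gt0.
have := monic_binom j.+1; rewrite prod_cyc3 big_nat_recr //= -prod_cyc3.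
by rewrite monicMl // monic_binom.
Qed.

Lemma cyc3_bezout m : cyc3 m.+1 + (2 - 'X^(3 ^ m)) * (1 + 'X^(3 ^ m)) = 3%:P.
Proof. by rewrite -polyC_natr /=; ring. Qed.

Lemma horner_cyc3_m1 j : (cyc3 j).[-1] = if j is 0 then 0 else 3.
Proof.
case: j => [|j]; first by rewrite !hornerE addrN.
by rewrite /cyc3 !hornerE -signr_odd oddX orbT expr1 sqrrN expr1n opprK.
Qed.

Definition cyc3_prod (L : nat) (a : nat -> nat) : {poly int} :=
  \prod_(0 <= j < L) cyc3 j ^+ a j.

Lemma eq_cyc3_prod L a b :
  (forall j, (j < L)%N -> a j = b j) -> cyc3_prod L a = cyc3_prod L b.
Proof. by move=> eq_ab; apply: eq_big_nat => j /andP[_ /eq_ab ->]. Qed.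

Lemma cyc3_prodD L a b :
  cyc3_prod L (fun j => a j + b j)%N = cyc3_prod L a * cyc3_prod L b.
Proof. by rewrite -big_split; apply: eq_bigr => j _; rewrite exprD. Qed.

Lemma cyc3_prod_monic L a : cyc3_prod L a \is monic.
Proof. by apply: monic_prod => j _; rewrite monic_exp ?cyc3_monic. Qed.

Lemma cyc3_prod_subnK L a b : (forall j, (j < L)%N -> a j <= b j)%N ->
  cyc3_prod L b = cyc3_prod L (fun j => b j - a j)%N * cyc3_prod L a.
Proof.
by move=> le_ab; rewrite -cyc3_prodD; apply: eq_cyc3_prod => j /le_ab/subnK.
Qed.

Lemma cyc3_prod_pred1 L i N : (i < L)%N ->
  cyc3_prod L (fun j => if j == i then N else 0%N) = cyc3 i ^+ N.
Proof.
move=> iL; rewrite /cyc3_prod big_mkord (bigD1 (Ordinal iL)) //= eqxx big1 ?mulr1 //.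
by move=> j; rewrite -val_eqE /= => /negbTE ->.
Qed.

Lemma cyc3_prod_leq L m N : (m < L)%N ->
  cyc3_prod L (fun j => if (j <= m)%N then N else 0%N) = (1 + 'X^(3 ^ m)) ^+ N.
Proof.
move=> mL; rewrite prod_cyc3 -prodrXl /cyc3_prod (big_cat_nat (leq0n m.+1) mL) /=.
rewrite [X in _ * X]big1_seq ?mulr1 => [|j /andP[_]]; last first.
  by rewrite mem_index_iota ltnNge => /andP[/negbTE ->].
by apply: eq_big_nat => j /andP[_]; rewrite ltnS => ->.
Qed.

Lemma prod_binom_cyc3 L (e : nat -> nat) :
  \prod_(0 <= k < L) (1 + 'X^(3 ^ k)) ^+ e k =
  cyc3_prod L (fun j => \sum_(j <= k < L) e k)%N.
Proof.
elim: L => [|L IH]; first by rewrite /cyc3_prod !big_geq.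
rewrite big_nat_recr //= IH prod_cyc3 -prodrXl /cyc3_prod [RHS]big_nat_recr //=.
rewrite big_nat1 [X in _ * X]big_nat_recr //= mulrA -big_split /=; congr (_ * _).
by apply: eq_big_nat => j /andP[_ jL]; rewrite -exprD big_nat_recr //= ltnW.
Qed.

Lemma horner_cyc3_prod_m1 L a : (0 < L)%N ->
  (cyc3_prod L a).[-1] = 0 ^+ a 0%N * 3 ^+ (\sum_(1 <= j < L) a j).
Proof.
move=> L0; rewrite horner_prod big_ltn // horner_exp horner_cyc3_m1.
rewrite -prodrXr; congr (_ * _); apply: eq_big_nat => j /andP[j1 _].
by rewrite horner_exp horner_cyc3_m1; case: j j1.
Qed.

Lemma dvdp_bezout (R : idomainType) (d A P Q u v : {poly R}) (c : R) :
  c != 0 -> u * P + v * Q = c%:P -> d %| A * P -> d %| A * Q -> d %| A.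
Proof.
move=> c0 uv dP dQ; rewrite -(dvdpZr _ _ c0) -mul_polyC -uv mulrDl.
by rewrite -!mulrA ![_ * A]mulrC; apply: dvdp_add; apply: dvdp_mull.
Qed.

Lemma dvdp_bezoutX (R : idomainType) (d A P Q u v : {poly R}) (c : R) N M :
  c != 0 -> u * P + v * Q = c%:P ->
  d %| A * P ^+ N -> d %| A * Q ^+ M -> d %| A.
Proof.
move=> c0 uv.
have dvdQX B : d %| B * P -> d %| B * Q ^+ M -> d %| B.
  elim: M B => [|M' IH] B dP dQ; first by rewrite expr0 mulr1 in dQ.
  apply: (IH _ dP); apply: (dvdp_bezout c0 uv); first by rewrite mulrAC; apply: dvdp_mulr.
  by rewrite -mulrA -exprSr.
elim: N A => [|N IH] A dP dQ; first by rewrite expr0 mulr1 in dP.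
apply: (IH A _ dQ); apply: dvdQX; first by rewrite -mulrA -exprSr.
by rewrite mulrAC; apply: dvdp_mulr.
Qed.

Lemma dvdZP (d p : {poly int}) :
  lead_coef d \is a GRing.unit -> reflect (dvdZ d p) (d %| p).
Proof.
move=> ud; apply: (iffP (Pdiv.IdomainUnit.dvdpP ud p)) => -[q ->]; exists q;
  exact: mulrC.
Qed.

Lemma dvdZ_monic_lead_unit (d p : {poly int}) :
  dvdZ d p -> p \is monic -> lead_coef d \is a GRing.unit.
Proof.
move=> [q ->] /monicP; rewrite lead_coefM => dq1.
by apply/unitrPr; exists (lead_coef q).
Qed.

Lemma dvdZ_monic_anti (g h : {poly int}) : g \is monic -> 0 < lead_coef h ->
  dvdZ g h -> dvdZ h g -> h = g.
Proof.
move=> mon_g lc_h [a def_h] [b def_g].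
have ab1 : a * b = 1.
  by apply: (mulfI (monic_neq0 mon_g)); rewrite mulrA -def_h -def_g mulr1.
have /andP[/eqP size_a a0_unit] : a \is a GRing.unit by apply/unitrPr; exists b.
have a_const := size1_polyC (eq_leq size_a).
move: lc_h a0_unit; rewrite def_h lead_coefM (monicP mon_g) mul1r a_const lead_coefC.
rewrite coefC eqxx => a0_pos /orP[] /eqP a0; first by rewrite a0 mulr1.
by rewrite a0 in a0_pos.
Qed.

Section GcdOfhT.
Variable n : nat.
Implicit Type t : n.-tuple 'I_n.+1.

Lemma hT_cyc3 t : hT t = cyc3_prod n.+1 (hT_exp t).
Proof.
pose e k := (n %/ 3 ^ k - mult t (3 ^ k))%N.
by rewrite /hT -(big_mkord xpredT (fun k => (1 + 'X^(3 ^ k)) ^+ e k)) prod_binom_cyc3.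
Qed.

Definition gT : {poly int} := cyc3_prod n.+1 (fun j => quot_tail n j.+1).

Lemma gT_monic : gT \is monic.
Proof. exact: cyc3_prod_monic. Qed.

Definition hT_quo t : {poly int} :=
  cyc3_prod n.+1 (fun j => hT_exp t j - quot_tail n j.+1)%N.

Lemma hT_quoK t : sumn (map val t) = n -> hT t = hT_quo t * gT.
Proof.
move=> sum_t; rewrite hT_cyc3; apply: cyc3_prod_subnK => j.
exact: quot_tailS_leq_hT_exp.
Qed.

Definition gcd_stage m : {poly int} :=
  cyc3_prod n.+1 (fun j => quot_tail n (j + (j <= m))).

Lemma gcd_stage0 : gcd_stage 0 = hT (pow_ones_part n 0).
Proof.
rewrite hT_cyc3; apply: eq_cyc3_prod => j jn.
by rewrite hT_exp_pow_ones_part ?jn // leqn0.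
Qed.

Lemma gcd_stage_last : gcd_stage n = gT.
Proof. by apply: eq_cyc3_prod => j jn; rewrite -ltnS jn addn1. Qed.

Lemma gcd_stageS m : (m < n)%N ->
  gcd_stage m = gcd_stage m.+1 * cyc3 m.+1 ^+ (n %/ 3 ^ m.+1).
Proof.
move=> mn; rewrite -(cyc3_prod_pred1 _ (mn : (m.+1 < n.+1)%N)) -cyc3_prodD.
apply: eq_cyc3_prod => j jn.
case: (ltngtP j m.+1) => [jm|mj|->].
- by rewrite -ltnS jm addn0.
- by rewrite leqNgt (ltnW mj) addn0.
- by rewrite ltnn addn0 addn1 addnC -quot_tail_recl.
Qed.

Lemma hT_pow_ones_part_dvdp m : (m < n)%N ->
  hT (pow_ones_part n m.+1) %| gcd_stage m.+1 * (1 + 'X^(3 ^ m)) ^+ quot_tail n 0.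
Proof.
move=> mn; rewrite -(cyc3_prod_leq _ (ltnW mn : (m < n.+1)%N)) -cyc3_prodD hT_cyc3.
rewrite [X in _ %| X](cyc3_prod_subnK (a := hT_exp (pow_ones_part n m.+1))) ?dvdp_mull // => j jn.
have [jm|mj] := leqP j m.
  apply: leq_trans (hT_exp_leq_quot_tail _ _) _.
  exact: leq_trans (leq_quot_tail n (leq0n j)) (leq_addl _ _).
have -> : (j <= m.+1)%N = (j == m.+1) by rewrite leq_eqVlt ltnS leqNgt mj orbF.
by rewrite addn0 hT_exp_pow_ones_part // mj jn.
Qed.

Section CommonDivisor.
Variable d : {poly int}.
Hypothesis d_dvd_hT : forall t, is_ternary t -> dvdZ d (hT t).

Lemma common_divisor_lead_unit : lead_coef d \is a GRing.unit.
Proof.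
apply: dvdZ_monic_lead_unit (d_dvd_hT (pow_ones_part_ternary n 0)) _.
by rewrite hT_cyc3 cyc3_prod_monic.
Qed.

Lemma dvdp_gcd_stage m : (m <= n)%N -> d %| gcd_stage m.
Proof.
have d_unit := common_divisor_lead_unit.
have dvdp_hT m' : d %| hT (pow_ones_part n m').
  exact/(dvdZP _ d_unit)/d_dvd_hT/pow_ones_part_ternary.
elim: m => [_|m IH mn]; first by rewrite gcd_stage0.
have bezout := cyc3_bezout m; rewrite -[cyc3 m.+1]mul1r in bezout.
apply: (dvdp_bezoutX _ bezout (N := n %/ 3 ^ m.+1) (M := quot_tail n 0)) => //.
  by rewrite -gcd_stageS // IH // ltnW.
exact: dvdp_trans (dvdp_hT m.+1) (hT_pow_ones_part_dvdp mn).
Qed.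

Lemma dvdZ_gT : dvdZ d gT.
Proof.
by apply/(dvdZP _ common_divisor_lead_unit); rewrite -gcd_stage_last dvdp_gcd_stage.
Qed.

End CommonDivisor.

Lemma gT_is_gcdT : is_gcdT n gT.
Proof.
split; [|exact: dvdZ_gT|by rewrite (monicP gT_monic) ltr01].
by move=> t /and3P[_ /eqP /hT_quoK -> _]; exists (hT_quo t); rewrite mulrC.
Qed.

Lemma is_gcdT_gT g : is_gcdT n g -> g = gT.
Proof.
case=> g_dvd_hT gcd_dvd lc_g; have [gT_dvd_hT _ _] := gT_is_gcdT.
exact: dvdZ_monic_anti gT_monic lc_g (gcd_dvd _ gT_dvd_hT) (dvdZ_gT g_dvd_hT).
Qed.

Definition numT_poly : {poly int} := \sum_(t | is_ternary t) hT_quo t.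

Lemma sumT_gT : sumT n = gT * numT_poly.
Proof.
rewrite mulr_sumr; apply: eq_bigr => t /and3P[_ /eqP /hT_quoK -> _].
exact: mulrC.
Qed.

Lemma numT_numT_poly : numT n numT_poly.
Proof. by exists gT; split; [exact: gT_is_gcdT|exact: sumT_gT]. Qed.

Lemma numT_eq q : numT n q -> q = numT_poly.
Proof.
case=> g [/is_gcdT_gT -> sumT_q].
by apply: (mulfI (monic_neq0 gT_monic)); rewrite -sumT_q sumT_gT.
Qed.

Lemma horner_hT_quo_m1 t : is_ternary t -> t != pow_ones_part n 0 ->
  (hT_quo t).[-1] = 0.
Proof.
move=> t_tern t_ne; have /and3P[_ /eqP sum_t _] := t_tern.
rewrite horner_cyc3_prod_m1 //.
have := quot_tailS_leq_hT_exp sum_t (ltn0Sn n); rewrite leq_eqVlt => /predU1P[e|lt].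
  by move: t_ne; rewrite (eq_pow_ones_part0 t_tern (esym e)) eqxx.
by rewrite expr0n subn_eq0 leqNgt lt mul0r.
Qed.

Lemma horner_hT_quo_ones_m1 : (hT_quo (pow_ones_part n 0)).[-1] = (3 ^ logn 3 n`!)%N%:Z.
Proof.
rewrite horner_cyc3_prod_m1 // hT_exp_pow_ones_part // subnn expr0 mul1r.
rewrite logn_fact // -natz natrX; congr (_ ^+ _); apply: eq_big_nat => j /andP[j1 jn].
by rewrite hT_exp_pow_ones_part ?jn // (gtn_eqF j1) addn0 quot_tail_recl // addnK.
Qed.

Lemma horner_numT_poly_m1 : numT_poly.[-1] = (3 ^ logn 3 n`!)%N%:Z.
Proof.
rewrite horner_sum (bigD1 (pow_ones_part n 0)) ?pow_ones_part_ternary //= big1 ?addr0.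
  exact: horner_hT_quo_ones_m1.
by move=> t /andP[t_tern t_ne]; apply: horner_hT_quo_m1.
Qed.

End GcdOfhT.

Theorem theorem4 :
  (forall n : nat, (1 <= n)%N ->
     (exists q : {poly int}, numT n q) /\
     (forall q : {poly int}, numT n q ->
        q.[-1] = ((3 ^ logn 3 n`!)%N)%:Z)) /\
  (forall n : nat, (1 <= n)%N ->
     forall q0 q1 q2 : {poly int},
       numT (3 * n) q0 -> numT (3 * n + 1) q1 -> numT (3 * n + 2) q2 ->
       [/\ q0.[-1] = ((3 ^ logn 3 (3 * n)`!)%N)%:Z,
           q1.[-1] = ((3 ^ logn 3 (3 * n)`!)%N)%:Z
         & q2.[-1] = ((3 ^ logn 3 (3 * n)`!)%N)%:Z]).
Proof.
split=> n _.
  split; first by exists (numT_poly n); apply: numT_numT_poly.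
  by move=> q /numT_eq ->; apply: horner_numT_poly_m1.
move=> q0 q1 q2 /numT_eq -> /numT_eq -> /numT_eq ->.
rewrite !horner_numT_poly_m1 addn1 addn2.
have ndvd1 : ~~ (3 %| (3 * n).+1)%N by rewrite -[(3 * n).+1]addn1 dvdn_addr ?dvdn_mulr.
have ndvd2 : ~~ (3 %| (3 * n).+2)%N by rewrite -[(3 * n).+2]addn2 dvdn_addr ?dvdn_mulr.
by rewrite (logn_factS_ndvd _ ndvd2) ?(logn_factS_ndvd _ ndvd1).
Qed.
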